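(* Let $\mathcal{L}$, $\mathcal{U}$, the bang-calculus interpretation $[\![\cdot]\!]$ and the CbN interpretation $[\![\cdot]\!]^n$ be as described in the context. For every $\lambda$-term $M$ and every repetition-free list $\vec x=(x_1,\dots,x_k)$ of variables with $\mathrm{FV}(M)\subseteq\{x_1,\dots,x_k\}$, one has $[\![M^n]\!]_{\vec x}=[\![M]\!]^n_{\vec x}$ up to Seely's isomorphisms, i.e. $[\![M^n]\!]_{\vec x}=[\![M]\!]^n_{\vec x}\circ\mu$, where $\mu:(!\mathcal{U})^{\otimes k}\to\,!(\mathcal{U}^k)$ is the canonical isomorphism built from the Seely isomorphisms $m^0,m^2$.
   Context: Bang calculus terms: $T,S ::= x\mid \lambda x.T\mid T\,S\mid \mathrm{der}\,T\mid\ !T$ ($\lambda$ the only binder). CbN translation of $\lambda$-terms: $x^n=x$, $(\lambda x.M)^n=\lambda x.M^n$, $(MN)^n=M^n\,(!N^n)$. Categorical setting: $\mathcal{L}$ is a $*$-autonomous category (symmetric monoidal closed with tensor $\otimes$, unit $1$, linear hom $X\multimap Y$, evaluation $\mathrm{ev}\in\mathcal{L}((X\multimap Y)\otimes X,Y)$, linear currying $\mathrm{cur}:\mathcal{L}(Z\otimes X,Y)\to\mathcal{L}(Z,X\multimap Y)$, dualizing object) which is cartesian (terminal $\top$, product $\&$, projections $\pi_1,\pi_2$, pairing $\langle f,g\rangle$), hence cocartesian with initial object $0$; it is equipped with a comonad $(!,\mathrm{der},\mathrm{dig})$ (dereliction $\mathrm{der}_X:\,!X\to X$, digging $\mathrm{dig}_X:\,!X\to\,!!X$)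 which is strong symmetric monoidal from $(\mathcal{L},\&,\top)$ to $(\mathcal{L},\otimes,1)$ via Seely isos $m^0\in\mathcal{L}(1,!\top)$, $m^2_{X,Y}\in\mathcal{L}(!X\otimes !Y,!(X\& Y))$, coherent with digging (a denotational model of linear logic). It is assumed that $0=\top$; then $0_{X,Y}\in\mathcal{L}(X,Y)$ denotes the composite $X\to\top=0\to Y$. Weakening $\mathrm{w}_X:\,!X\to1$ and contraction $\mathrm{c}$ (on $(!\mathcal{U})^{\otimes k}$, into $(!\mathcal{U})^{\otimes k}\otimes(!\mathcal{U})^{\otimes k}$) and the coalgebra structure map $\mathrm{p}:(!\mathcal{U})^{\otimes k}\to\,!((!\mathcal{U})^{\otimes k})$ are the standard ones. $\mathcal{U}$ is an object with $\mathcal{U}=\,!\mathcal{U}\,\&\,(!\mathcal{U}\multimap\mathcal{U})$. Bang interpretation: for a repetition-free list $\vec x=(x_1,\dots,x_k)$ containing $\mathrm{FV}(T)$, $[\![T]\!]_{\vec x}\in\mathcal{L}((!\mathcal{U})^{\otimes k},\mathcal{U})$: $[\![x_i]\!]_{\vec x}=\mathrm{w}^{\otimes i-1}\otimes\mathrm{der}_{\mathcal{U}}\otimes\mathrm{w}^{\otimes k-i}$ (up to unit isos); $[\![\lambda y.S]\!]_{\vec x}=\langle 0,\mathrm{cur}([\![S]\!]_{\vec x,y})\rangle$; $[\![S\,R]\!]_{\vec x}=\mathrm{ev}\circ((\pi_2[\![S]\!]_{\vec x})\otimes(\pi_1[\![R]\!]_{\vec x}))\circ\mathrm{c}$; $[\![!S]\!]_{\vec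 x}=\langle\,!([\![S]\!]_{\vec x})\circ\mathrm{p},\,0\rangle$; $[\![\mathrm{der}\,S]\!]_{\vec x}=\mathrm{der}_{\mathcal{U}}\circ\pi_1\circ[\![S]\!]_{\vec x}$. CbN interpretation: the Kleisli category $\mathcal{L}_!$ has $\mathcal{L}_!(A,B)=\mathcal{L}(!A,B)$, composition $f\circ_! g=f\circ\,!g\circ\mathrm{dig}$, identities $\mathrm{der}_A$, Kleisli projections $\pi_i\circ\mathrm{der}$, exponential $!A\multimap B$ with $\mathrm{Ev}=\mathrm{ev}\circ(\mathrm{der}_{!A\multimap B}\otimes\mathrm{id}_{!A})\circ(m^2)^{-1}$ and $\mathrm{Cur}(f)=\mathrm{cur}(f\circ m^2)$. Let $\mathrm{lam}=\langle 0,\mathrm{id}\rangle\in\mathcal{L}(!\mathcal{U}\multimap\mathcal{U},\mathcal{U})$, $\mathrm{app}=\pi_2$, $\mathrm{lam}_n=\mathrm{der}_{\mathcal{U}}\circ\,!\mathrm{lam}$, $\mathrm{app}_n=\mathrm{der}_{!\mathcal{U}\multimap\mathcal{U}}\circ\,!\mathrm{app}$. With $\mathcal{U}^k=\&_{i=1}^k\mathcal{U}$, $[\![M]\!]^n_{\vec x}\in\mathcal{L}_!(\mathcal{U}^k,\mathcal{U})$ is: $[\![x_i]\!]^n_{\vec x}=\pi_i\circ\mathrm{der}_{\mathcal{U}^k}$; $[\![\lambda y.M]\!]^n_{\vec x}=\mathrm{lam}_n\circ_!\mathrm{Cur}([\![M]\!]^n_{\vec x,y})$; $[\![MN]\!]^n_{\vec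 x}=\mathrm{Ev}\circ_!\langle\mathrm{app}_n\circ_![\![M]\!]^n_{\vec x},[\![N]\!]^n_{\vec x}\rangle$. *)

From Stdlib Require Import List Arith.
Import ListNotations.

Record LLModel := {
  ob : Type;
  hom : ob -> ob -> Type;
  idm : forall {A}, hom A A;
  comp : forall {A B C}, hom B C -> hom A B -> hom A C;
  comp_idl : forall A B (f : hom A B), comp idm f = f;
  comp_idr : forall A B (f : hom A B), comp f idm = f;
  comp_assoc : forall A B C D (f : hom C D) (g : hom B C) (h : hom A B),
      comp f (comp g h) = comp (comp f g) h;

  tens : ob -> ob -> ob;
  tensm : forall {A A' B B'}, hom A A' -> hom B B' -> hom (tens A B) (tens A' B');
  one : ob;
  tensm_id : forall A B, tensm (@idm A) (@idm B) = idm;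
  tensm_comp : forall A A' A'' B B' B'' (f : hom A' A'') (g : hom A A')
      (h : hom B' B'') (k : hom B B'),
      tensm (comp f g) (comp h k) = comp (tensm f h) (tensm g k);
  alpha : forall A B C, hom (tens (tens A B) C) (tens A (tens B C));
  alpha_inv : forall A B C, hom (tens A (tens B C)) (tens (tens A B) C);
  alpha_iso1 : forall A B C, comp (alpha A B C) (alpha_inv A B C) = idm;
  alpha_iso2 : forall A B C, comp (alpha_inv A B C) (alpha A B C) = idm;
  alpha_nat : forall A A' B B' C C' (f : hom A A') (g : hom B B') (h : hom C C'),
      comp (alpha A' B' C') (tensm (tensm f g) h)
      = comp (tensm f (tensm g h)) (alpha A B C);
  lunit : forall A, hom (tens one A) A;
  lunit_inv : forall A, hom A (tens one A);
  lunit_iso1 : forall A, comp (lunit A) (lunit_inv A) = idm;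
  lunit_iso2 : forall A, comp (lunit_inv A) (lunit A) = idm;
  lunit_nat : forall A A' (f : hom A A'),
      comp (lunit A') (tensm idm f) = comp f (lunit A);
  runit : forall A, hom (tens A one) A;
  runit_inv : forall A, hom A (tens A one);
  runit_iso1 : forall A, comp (runit A) (runit_inv A) = idm;
  runit_iso2 : forall A, comp (runit_inv A) (runit A) = idm;
  runit_nat : forall A A' (f : hom A A'),
      comp (runit A') (tensm f idm) = comp f (runit A);
  sym : forall A B, hom (tens A B) (tens B A);
  sym_inv : forall A B, comp (sym B A) (sym A B) = idm;
  sym_nat : forall A A' B B' (f : hom A A') (g : hom B B'),
      comp (sym A' B') (tensm f g) = comp (tensm g f) (sym A B);
  pentagon : forall A B C D,
      comp (alpha A B (tens C D)) (alpha (tens A B) C D)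
      = comp (tensm idm (alpha B C D))
          (comp (alpha A (tens B C) D) (tensm (alpha A B C) idm));
  triangle : forall A B,
      comp (tensm idm (lunit B)) (alpha A one B) = tensm (runit A) idm;
  hexagon : forall A B C,
      comp (alpha B C A) (comp (sym A (tens B C)) (alpha A B C))
      = comp (tensm idm (sym A C)) (comp (alpha B A C) (tensm (sym A B) idm));
  sym_unit : forall A, comp (lunit A) (sym A one) = runit A;

  lhom : ob -> ob -> ob;
  ev : forall A B, hom (tens (lhom A B) A) B;
  cur : forall {Z A B}, hom (tens Z A) B -> hom Z (lhom A B);
  ev_cur : forall Z A B (f : hom (tens Z A) B),
      comp (ev A B) (tensm (cur f) idm) = f;
  cur_uniq : forall Z A B (g : hom Z (lhom A B)),
      cur (comp (ev A B) (tensm g idm)) = g;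

  dualizing : ob;
  bidual_inv : forall A, hom (lhom (lhom A dualizing) dualizing) A;
  bidual_iso1 : forall A,
      comp (bidual_inv A) (cur (comp (ev A dualizing) (sym A (lhom A dualizing)))) = idm;
  bidual_iso2 : forall A,
      comp (cur (comp (ev A dualizing) (sym A (lhom A dualizing)))) (bidual_inv A) = idm;

  top : ob;
  term : forall A, hom A top;
  term_uniq : forall A (f : hom A top), f = term A;
  with_ : ob -> ob -> ob;
  pi1 : forall {A B}, hom (with_ A B) A;
  pi2 : forall {A B}, hom (with_ A B) B;
  pair : forall {Z A B}, hom Z A -> hom Z B -> hom Z (with_ A B);
  pi1_pair : forall Z A B (f : hom Z A) (g : hom Z B), comp pi1 (pair f g) = f;
  pi2_pair : forall Z A B (f : hom Z A) (g : hom Z B), comp pi2 (pair f g) = g;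
  pair_uniq : forall Z A B (h : hom Z (with_ A B)), pair (comp pi1 h) (comp pi2 h) = h;

  init : forall A, hom top A;
  init_uniq : forall A (f : hom top A), f = init A;

  bang : ob -> ob;
  bangm : forall {A B}, hom A B -> hom (bang A) (bang B);
  bangm_id : forall A, bangm (@idm A) = idm;
  bangm_comp : forall A B C (f : hom B C) (g : hom A B),
      bangm (comp f g) = comp (bangm f) (bangm g);
  der : forall A, hom (bang A) A;
  der_nat : forall A B (f : hom A B), comp (der B) (bangm f) = comp f (der A);
  dig : forall A, hom (bang A) (bang (bang A));
  dig_nat : forall A B (f : hom A B),
      comp (dig B) (bangm f) = comp (bangm (bangm f)) (dig A);
  comonad_l : forall A, comp (der (bang A)) (dig A) = idm;
  comonad_r : forall A, comp (bangm (der A)) (dig A) = idm;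
  comonad_assoc : forall A, comp (dig (bang A)) (dig A) = comp (bangm (dig A)) (dig A);

  m0 : hom one (bang top);
  m0_inv : hom (bang top) one;
  m0_iso1 : comp m0 m0_inv = idm;
  m0_iso2 : comp m0_inv m0 = idm;
  m2 : forall A B, hom (tens (bang A) (bang B)) (bang (with_ A B));
  m2_inv : forall A B, hom (bang (with_ A B)) (tens (bang A) (bang B));
  m2_iso1 : forall A B, comp (m2 A B) (m2_inv A B) = idm;
  m2_iso2 : forall A B, comp (m2_inv A B) (m2 A B) = idm;
  m2_nat : forall A A' B B' (f : hom A A') (g : hom B B'),
      comp (bangm (pair (comp f pi1) (comp g pi2))) (m2 A B)
      = comp (m2 A' B') (tensm (bangm f) (bangm g));
  m2_assoc : forall A B C,
      comp (bangm (pair (comp pi1 pi1) (pair (comp pi2 pi1) pi2)))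
        (comp (m2 (with_ A B) C) (tensm (m2 A B) idm))
      = comp (m2 A (with_ B C))
          (comp (tensm idm (m2 B C)) (alpha (bang A) (bang B) (bang C)));
  m2_lunit : forall A,
      comp (bangm pi2) (comp (m2 top A) (tensm m0 idm)) = lunit (bang A);
  m2_runit : forall A,
      comp (bangm pi1) (comp (m2 A top) (tensm idm m0)) = runit (bang A);
  m2_sym : forall A B,
      comp (bangm (pair pi2 pi1)) (m2 A B) = comp (m2 B A) (sym (bang A) (bang B));
  m2_dig : forall A B,
      comp (bangm (pair (bangm pi1) (bangm pi2))) (comp (dig (with_ A B)) (m2 A B))
      = comp (m2 (bang A) (bang B)) (tensm (dig A) (dig B));
  m0_dig : comp (bangm (term (bang top))) (comp (dig top) m0) = m0
}.

Arguments ob L : rename.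
Arguments idm {_ A}.
Arguments comp {_ A B C}.
Arguments tensm {_ A A' B B'}.
Arguments cur {_ Z A B}.
Arguments pi1 {_ A B}.
Arguments pi2 {_ A B}.
Arguments pair {_ Z A B}.
Arguments bangm {_ A B}.

Definition var := nat.

Inductive lterm : Type :=
| LVar : var -> lterm
| LLam : var -> lterm -> lterm
| LApp : lterm -> lterm -> lterm.

Inductive bterm : Type :=
| BVar : var -> bterm
| BLam : var -> bterm -> bterm
| BApp : bterm -> bterm -> bterm
| BDer : bterm -> bterm
| BBang : bterm -> bterm.

Fixpoint fv (M : lterm) : list var :=
  match M with
  | LVar x => [x]
  | LLam x N => remove Nat.eq_dec x (fv N)
  | LApp N P => fv N ++ fv P
  end.

Fixpoint cbn (M : lterm) : bterm :=
  match M with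
  | LVar x => BVar x
  | LLam x N => BLam x (cbn N)
  | LApp N P => BApp (cbn N) (BBang (cbn P))
  end.

(* Contexts are handled internally as REVERSED lists: [y :: c] is the       *)
(* context c extended at the END by y.  (!U)^{(x) k} is left-nested         *)
(* ((1 (x) !U) (x) ...) (x) !U and U^k = ((T & U) & ...) & U.               *)
(* A variable refers to its last occurrence (irrelevant for repetition-free *)
(* contexts; it implements alpha-renaming of binders).                      *)

Section Interp.
Variable L : LLModel.
Variable U : ob L.
Hypothesis eU : U = with_ L (bang L U) (lhom L (bang L U) U).

Local Notation "g \o f" := (comp g f) (at level 40, left associativity).

Definition zero (A B : ob L) : hom L A B := init L B \o term L A.

Definition unfoldU : hom L U (with_ L (bang L U) (lhom L (bang L U) U)) :=
  match eU in _ = Y return hom L U Y with eq_refl => idm end.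
Definition foldU : hom L (with_ L (bang L U) (lhom L (bang L U) U)) U :=
  match eU in _ = Y return hom L Y U with eq_refl => idm end.

Definition weak (A : ob L) : hom L (bang L A) (one L) := m0_inv L \o bangm (term L A).
Definition contr (A : ob L) : hom L (bang L A) (tens L (bang L A) (bang L A)) :=
  m2_inv L A A \o bangm (pair idm idm).

(* the lax monoidal structure of ! w.r.t. (x) induced by the Seely isos *)
Definition mu0 : hom L (one L) (bang L (one L)) := bangm (m0_inv L) \o dig L (top L) \o m0 L.
Definition mu2 (A B : ob L) : hom L (tens L (bang L A) (bang L B)) (bang L (tens L A B)) :=
  bangm (tensm (der L A) (der L B) \o m2_inv L A B) \o dig L (with_ L A B) \o m2 L A B.

Definition interchange (A A' B B' : ob L) :
  hom L (tens L (tens L A A') (tens L B B')) (tens L (tens L A B) (tens L A' B')) :=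
  alpha_inv L A B (tens L A' B')
  \o tensm idm (alpha L B A' B')
  \o tensm idm (tensm (sym L A' B) idm)
  \o tensm idm (alpha_inv L A' B B')
  \o alpha L A A' (tens L B B').

Fixpoint tp (c : list var) : ob L :=
  match c with
  | [] => one L
  | _ :: c' => tens L (tp c') (bang L U)
  end.

Fixpoint weak_all (c : list var) : hom L (tp c) (one L) :=
  match c with
  | [] => idm
  | _ :: c' => lunit L (one L) \o tensm (weak_all c') (weak U)
  end.

Fixpoint contr_tp (c : list var) : hom L (tp c) (tens L (tp c) (tp c)) :=
  match c with
  | [] => lunit_inv L (one L)
  | _ :: c' => interchange _ _ _ _ \o tensm (contr_tp c') (contr U)
  end.

Fixpoint coalg (c : list var) : hom L (tp c) (bang L (tp c)) :=
  match c with
  | [] => mu0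
  | _ :: c' => mu2 (tp c') (bang L U) \o tensm (coalg c') (dig L U)
  end.

Fixpoint var_int (c : list var) (x : var) : hom L (tp c) U :=
  match c with
  | [] => zero _ _
  | y :: c' =>
      if Nat.eq_dec x y
      then der L U \o lunit L (bang L U) \o tensm (weak_all c') idm
      else var_int c' x \o runit L (tp c') \o tensm idm (weak U)
  end.

Fixpoint bint_r (T : bterm) (c : list var) : hom L (tp c) U :=
  match T with
  | BVar x => var_int c x
  | BLam y S0 => foldU \o pair (zero _ _) (cur (bint_r S0 (y :: c)))
  | BApp S0 R =>
      ev L (bang L U) U
      \o tensm (pi2 \o unfoldU \o bint_r S0 c) (pi1 \o unfoldU \o bint_r R c)
      \o contr_tp c
  | BBang S0 => foldU \o pair (bangm (bint_r S0 c) \o coalg c) (zero _ _)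
  | BDer S0 => der L U \o pi1 \o unfoldU \o bint_r S0 c
  end.

Definition bint (T : bterm) (xs : list var) : hom L (tp (rev xs)) U :=
  bint_r T (rev xs).

Definition kcomp {A B C : ob L} (f : hom L (bang L B) C) (g : hom L (bang L A) B) :
  hom L (bang L A) C := f \o bangm g \o dig L A.

Definition Ev (A B : ob L) : hom L (bang L (with_ L (lhom L (bang L A) B) A)) B :=
  ev L (bang L A) B \o tensm (der L (lhom L (bang L A) B)) idm
  \o m2_inv L (lhom L (bang L A) B) A.

Definition Cur {Z A B : ob L} (f : hom L (bang L (with_ L Z A)) B) :
  hom L (bang L Z) (lhom L (bang L A) B) := cur (f \o m2 L Z A).

Definition lam : hom L (lhom L (bang L U) U) U := foldU \o pair (zero _ _) idm.
Definition app : hom L U (lhom L (bang L U) U) := pi2 \o unfoldU.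
Definition lam_n : hom L (bang L (lhom L (bang L U) U)) U := der L U \o bangm lam.
Definition app_n : hom L (bang L U) (lhom L (bang L U) U) :=
  der L (lhom L (bang L U) U) \o bangm app.

Fixpoint wp (c : list var) : ob L :=
  match c with
  | [] => top L
  | _ :: c' => with_ L (wp c') U
  end.

Fixpoint proj (c : list var) (x : var) : hom L (wp c) U :=
  match c with
  | [] => zero _ _
  | y :: c' => if Nat.eq_dec x y then pi2 else proj c' x \o pi1
  end.

Fixpoint nint_r (M : lterm) (c : list var) : hom L (bang L (wp c)) U :=
  match M with
  | LVar x => proj c x \o der L (wp c)
  | LLam y N => kcomp lam_n (Cur (nint_r N (y :: c)))
  | LApp N P => kcomp (Ev U U) (pair (kcomp app_n (nint_r N c)) (nint_r P c))
  end.

Definition nint (M : lterm) (xs : list var) : hom L (bang L (wp (rev xs))) U :=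
  nint_r M (rev xs).

Fixpoint mu_r (c : list var) : hom L (tp c) (bang L (wp c)) :=
  match c with
  | [] => m0 L
  | _ :: c' => m2 L (wp c') U \o tensm (mu_r c') idm
  end.

Definition mu (xs : list var) : hom L (tp (rev xs)) (bang L (wp (rev xs))) :=
  mu_r (rev xs).

End Interp.

(* The Seely isomorphism mu transports the structure that the bang
   interpretation uses on (!U)^k (weakening, contraction, the coalgebra map p)
   to the comonad structure of !(U^k): [weak \o mu = weak_all],
   [contr \o mu = (mu (x) mu) \o contr_tp] and [dig \o mu = !mu \o p].  These
   hold because m2 is compatible with projections, with associativity and
   symmetry (hence with the middle-four interchange) and with digging.  Then a
   variable is a dereliction read through m2, an abstraction uses
   [der \o dig = id], and an application splits the context of the Kleisli
   evaluation by contraction. *)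

From Pilot Require Import Defs.
From Stdlib Require Import List Arith.

Local Notation "g \o f" := (comp g f) (at level 40, left associativity).

Ltac assoc_right := repeat rewrite <- comp_assoc.

Ltac assoc_right_in H := repeat rewrite <- comp_assoc in H.

Ltac instantiate_foralls H :=
  repeat lazymatch type of H with
  | forall _ : ?T, _ => let x := fresh in evar (x : T); specialize (H x); subst x
  end.

(* Composites are kept right-associated, so the left side [f \o (g \o h)] of
   an equation usually occurs in a goal as [f \o (g \o (h \o k))]: rewrite
   with the equation precomposed by an unknown [k] first. *)
Ltac rewrite_in_chain H :=
  first [ let K := fresh in
          epose proof (f_equal (fun h => h \o _) H) as K; cbn beta in K;
          assoc_right_in K; rewrite K; clear K
        | rewrite H ].

Tactic Notation "rw" uconstr(E) :=
  let H := fresh in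
  assoc_right; epose proof E as H; instantiate_foralls H; assoc_right_in H;
  rewrite_in_chain H; clear H; assoc_right.

Tactic Notation "rw" "<-" uconstr(E) :=
  let H := fresh in
  assoc_right; epose proof E as H; instantiate_foralls H; symmetry in H; assoc_right_in H;
  rewrite_in_chain H; clear H; assoc_right.

Section Cartesian.
Variable L : LLModel.

Lemma pair_comp {X Z A B : ob L} (f : hom L Z A) (g : hom L Z B) (h : hom L X Z) :
  pair f g \o h = pair (f \o h) (g \o h).
Proof.
  rewrite <- (pair_uniq _ _ _ _ (pair f g \o h)).
  rewrite !comp_assoc, pi1_pair, pi2_pair. reflexivity.
Qed.

Lemma pair_ext {Z A B : ob L} (f g : hom L Z (with_ L A B)) :
  pi1 \o f = pi1 \o g -> pi2 \o f = pi2 \o g -> f = g.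
Proof.
  intros H1 H2. rewrite <- (pair_uniq _ _ _ _ f), <- (pair_uniq _ _ _ _ g), H1, H2.
  reflexivity.
Qed.

Lemma top_hom_eq {X : ob L} (f g : hom L X (top L)) : f = g.
Proof. rewrite (term_uniq _ _ f), (term_uniq _ _ g). reflexivity. Qed.

Lemma zero_comp {X A B : ob L} (h : hom L X A) : zero L A B \o h = zero L X B.
Proof.
  unfold zero. rewrite <- comp_assoc, (top_hom_eq (term L A \o h) (term L X)). reflexivity.
Qed.

End Cartesian.

Hint Rewrite <- comp_assoc : cartesian.
Hint Rewrite pi1_pair pi2_pair pair_comp comp_idl comp_idr : cartesian.

Ltac solve_cartesian :=
  repeat lazymatch goal with |- @eq (hom _ _ (with_ _ _ _)) _ _ => apply pair_ext end;
  autorewrite with cartesian; first [reflexivity | apply top_hom_eq].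

Section Monoidal.
Variable L : LLModel.

Lemma nat_inverse {A B C D : ob L} (i : hom L A B) (i' : hom L B A)
    (j : hom L C D) (j' : hom L D C) (f : hom L B D) (g : hom L A C) :
  i \o i' = idm -> j' \o j = idm -> f \o i = j \o g -> j' \o f = g \o i'.
Proof.
  intros Hi Hj E.
  rewrite <- (comp_idr _ _ _ (j' \o f)), <- Hi, <- !comp_assoc, (comp_assoc _ _ _ _ _ f), E.
  rewrite !comp_assoc, Hj, comp_idl. reflexivity.
Qed.

Lemma inverse_comp_eq {A B C : ob L} (i : hom L B C) (i' : hom L C B)
    (f : hom L A B) (g : hom L A C) :
  i' \o i = idm -> i \o f = g -> f = i' \o g.
Proof. intros Hi <-. rewrite comp_assoc, Hi, comp_idl. reflexivity. Qed.

Lemma alpha_inv_nat {A A' B B' C C' : ob L} (f : hom L A A') (g : hom L B B') (h : hom L C C') :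
  alpha_inv L A' B' C' \o tensm f (tensm g h) = tensm (tensm f g) h \o alpha_inv L A B C.
Proof.
  apply (nat_inverse (alpha L A B C) _ (alpha L A' B' C'));
    [apply alpha_iso1 | apply alpha_iso2 | symmetry; apply alpha_nat].
Qed.

Lemma tensm_comp_l {A B C D : ob L} (f : hom L B C) (g : hom L A B) :
  tensm (f \o g) (@idm L D) = tensm f idm \o tensm g idm.
Proof. rewrite <- tensm_comp, comp_idl. reflexivity. Qed.

Lemma tensm_comp_r {A B C D : ob L} (f : hom L B C) (g : hom L A B) :
  tensm (@idm L D) (f \o g) = tensm idm f \o tensm idm g.
Proof. rewrite <- tensm_comp, comp_idl. reflexivity. Qed.

Lemma tensm_split_rl {A A' B B' : ob L} (f : hom L A A') (g : hom L B B') :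
  tensm f g = tensm f idm \o tensm idm g.
Proof. rewrite <- tensm_comp, comp_idl, comp_idr. reflexivity. Qed.

Lemma tensm_split_lr {A A' B B' : ob L} (f : hom L A A') (g : hom L B B') :
  tensm f g = tensm idm g \o tensm f idm.
Proof. rewrite <- tensm_comp, comp_idl, comp_idr. reflexivity. Qed.

Lemma tensm_id_comm {A A' B B' : ob L} (f : hom L A A') (g : hom L B B') :
  tensm idm g \o tensm f idm = tensm f idm \o tensm idm g.
Proof. rewrite <- !tensm_comp, !comp_idl, !comp_idr. reflexivity. Qed.

Lemma alpha_nat_r {A B C C' : ob L} (h : hom L C C') :
  alpha L A B C' \o tensm idm h = tensm idm (tensm idm h) \o alpha L A B C.
Proof. rewrite <- (tensm_id L A B), alpha_nat. reflexivity. Qed.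

Lemma alpha_inv_nat_r {A B C C' : ob L} (h : hom L C C') :
  alpha_inv L A B C' \o tensm idm (tensm idm h) = tensm idm h \o alpha_inv L A B C.
Proof. rewrite alpha_inv_nat, tensm_id. reflexivity. Qed.

Lemma interchange_nat {A A' B B' C C' D D' : ob L}
    (f : hom L A C) (f' : hom L A' C') (g : hom L B D) (g' : hom L B' D') :
  interchange L C C' D D' \o tensm (tensm f f') (tensm g g') =
  tensm (tensm f g) (tensm f' g') \o interchange L A A' B B'.
Proof.
  unfold interchange. assoc_right. rw alpha_nat. rewrite (tensm_split_lr f). assoc_right.
  repeat rw <- tensm_comp_r. rewrite alpha_inv_nat.
  rw <- (tensm_comp L _ _ _ _ _ _ (sym L _ _) (tensm f' g) idm g').
  rewrite comp_idl, sym_nat.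
  rewrite <- (comp_idr _ _ _ g'), tensm_comp, comp_idr. assoc_right.
  rw alpha_nat. rewrite !tensm_comp_r. assoc_right.
  repeat rw tensm_id_comm. rw <- tensm_split_rl.
  rw alpha_inv_nat. reflexivity.
Qed.

Lemma cur_comp {Z Z' A B : ob L} (g : hom L (tens L Z A) B) (h : hom L Z' Z) :
  cur g \o h = cur (g \o tensm h idm).
Proof.
  rewrite <- (cur_uniq L _ _ _ (cur g \o h)). f_equal.
  rewrite tensm_comp_l. rw ev_cur. reflexivity.
Qed.
End Monoidal.

Section Seely.
Variable L : LLModel.

Lemma m2_inv_nat {A A' B B' : ob L} (f : hom L A A') (g : hom L B B') :
  m2_inv L A' B' \o bangm (pair (f \o pi1) (g \o pi2))
  = tensm (bangm f) (bangm g) \o m2_inv L A B.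
Proof.
  apply (nat_inverse L (m2 L A B) _ (m2 L A' B'));
    [apply m2_iso1 | apply m2_iso2 | apply m2_nat].
Qed.

Lemma m2_nat_l {A A' B : ob L} (f : hom L A A') :
  m2 L A' B \o tensm (bangm f) idm = bangm (pair (f \o pi1) pi2) \o m2 L A B.
Proof. rewrite <- (bangm_id L B), <- m2_nat, comp_idl. reflexivity. Qed.

Lemma m2_nat_r {A B B' : ob L} (g : hom L B B') :
  m2 L A B' \o tensm idm (bangm g) = bangm (pair pi1 (g \o pi2)) \o m2 L A B.
Proof. rewrite <- (bangm_id L A), <- m2_nat, comp_idl. reflexivity. Qed.

Lemma bangm_id_l {X A : ob L} (p : hom L A A) (f : hom L X (bang L A)) :
  p = idm -> bangm p \o f = f.
Proof. intros ->. rewrite bangm_id, comp_idl. reflexivity. Qed.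

Lemma bangm_term (A : ob L) : bangm (term L A) = m0 L \o weak L A.
Proof. unfold weak. rw m0_iso1. rewrite comp_idl. reflexivity. Qed.

Lemma bangm_pi1_m2 (A B : ob L) :
  bangm pi1 \o m2 L A B = runit L (bang L A) \o tensm idm (weak L B).
Proof.
  replace (bangm (@pi1 L A B))
    with (bangm (@pi1 L A (top L)) \o bangm (pair (idm \o pi1) (term L B \o pi2)))
    by (rewrite <- bangm_comp; f_equal; solve_cartesian).
  assoc_right. rw m2_nat. rewrite bangm_id, bangm_term, tensm_comp_r. rw m2_runit. reflexivity.
Qed.

Lemma bangm_pi2_m2 (A B : ob L) :
  bangm pi2 \o m2 L A B = lunit L (bang L B) \o tensm (weak L A) idm.
Proof.
  replace (bangm (@pi2 L A B))
    with (bangm (@pi2 L (top L) B) \o bangm (pair (term L A \o pi1) (idm \o pi2)))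
    by (rewrite <- bangm_comp; f_equal; solve_cartesian).
  assoc_right. rw m2_nat. rewrite bangm_id, bangm_term, tensm_comp_l. rw m2_lunit. reflexivity.
Qed.

Lemma der_pi1_m2 (A B : ob L) :
  pi1 \o (der L _ \o m2 L A B) = der L A \o (runit L (bang L A) \o tensm idm (weak L B)).
Proof. rw <- der_nat. rewrite bangm_pi1_m2. reflexivity. Qed.

Lemma der_pi2_m2 (A B : ob L) :
  pi2 \o (der L _ \o m2 L A B) = der L B \o (lunit L (bang L B) \o tensm (weak L A) idm).
Proof. rw <- der_nat. rewrite bangm_pi2_m2. reflexivity. Qed.

Lemma weak_m2 (A B : ob L) :
  weak L (with_ L A B) \o m2 L A B = lunit L (one L) \o tensm (weak L A) (weak L B).
Proof.
  unfold weak at 1.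
  replace (bangm (term L (with_ L A B))) with
    (bangm (@pi2 L (top L) (top L)) \o bangm (pair (term L A \o pi1) (term L B \o pi2)))
    by (rewrite <- bangm_comp; f_equal; apply top_hom_eq).
  assoc_right. rw m2_nat. rewrite !bangm_term, tensm_comp, (tensm_split_rl L (m0 L) (m0 L)).
  assoc_right. rw m2_lunit. rw lunit_nat. rw m0_iso2. rewrite comp_idl. reflexivity.
Qed.

Lemma contr_dig (A : ob L) :
  contr L (bang L A) \o dig L A = tensm (dig L A) (dig L A) \o contr L A.
Proof.
  assert (H : bangm (pair idm idm) \o dig L A
              = m2 L _ _ \o (tensm (dig L A) (dig L A) \o contr L A)).
  { unfold contr. rw <- m2_dig. rw m2_iso1. rewrite comp_idl. rw dig_nat.
    rw <- bangm_comp. rewrite pair_comp, <- !bangm_comp, pi1_pair, pi2_pair, bangm_id.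
    reflexivity. }
  unfold contr at 1. assoc_right. rewrite H. rw m2_iso2. rewrite comp_idl. reflexivity.
Qed.

Lemma m2_proj_contr (A B : ob L) :
  m2 L A B \o (tensm (bangm pi1) (bangm pi2) \o contr L (with_ L A B)) = idm.
Proof.
  unfold contr. rw <- m2_inv_nat. rw m2_iso1. rewrite comp_idl, <- bangm_comp, <- bangm_id.
  f_equal. solve_cartesian.
Qed.

(* m2 is a coalgebra morphism, [!A (x) !B] carrying [mu2 \o (dig (x) dig)]. *)
Lemma dig_m2 (A B : ob L) :
  dig L (with_ L A B) \o m2 L A B
  = bangm (m2 L A B) \o (mu2 L (bang L A) (bang L B) \o tensm (dig L A) (dig L B)).
Proof.
  assert (E : m2 L A B \o (tensm (der L (bang L A)) (der L (bang L B))
                \o (m2_inv L _ _ \o (bangm (pair (bangm pi1) (bangm pi2)) \o dig L (with_ L A B))))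
              = idm).
  { replace (pair (bangm (@pi1 L A B)) (bangm pi2))
      with (pair (bangm (@pi1 L A B) \o pi1) (bangm pi2 \o pi2) \o pair idm idm) by solve_cartesian.
    rewrite bangm_comp. assoc_right. rw m2_inv_nat. rw <- tensm_comp. rewrite !der_nat.
    rewrite tensm_comp. assoc_right.
    pose proof (contr_dig (with_ L A B)) as Hcontr. unfold contr in Hcontr. rw Hcontr.
    rw <- (tensm_comp L _ _ _ _ _ _ (der L _) (dig L _) (der L _) (dig L _)).
    rewrite !comonad_l, tensm_id, comp_idl. apply m2_proj_contr. }
  unfold mu2. rw <- m2_dig. rw dig_nat. rw comonad_assoc.
  repeat rw <- bangm_comp. rewrite E, bangm_id, comp_idl. reflexivity.
Qed.

Lemma mu2_nat {A A' B B' : ob L} (f : hom L A A') (g : hom L B B') :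
  mu2 L A' B' \o tensm (bangm f) (bangm g) = bangm (tensm f g) \o mu2 L A B.
Proof.
  unfold mu2. rw <- m2_nat. rw dig_nat. repeat rw <- bangm_comp. f_equal. f_equal.
  rw m2_inv_nat. rw <- tensm_comp. rewrite !der_nat, tensm_comp. assoc_right. reflexivity.
Qed.

Lemma m2_assoc_inv (A B C : ob L) :
  m2 L (with_ L A B) C \o tensm (m2 L A B) idm =
  bangm (pair (pair pi1 (pi1 \o pi2)) (pi2 \o pi2))
  \o (m2 L A (with_ L B C) \o (tensm idm (m2 L B C) \o alpha L _ _ _)).
Proof.
  rewrite <- (m2_assoc L A B C). rw <- bangm_comp.
  symmetry. apply bangm_id_l. solve_cartesian.
Qed.

Lemma m2_exchange (X Y Z : ob L) :
  m2 L Y (with_ L X Z) \o (tensm idm (m2 L X Z) \o (alpha L _ _ _ \o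
    (tensm (sym L (bang L X) (bang L Y)) idm \o alpha_inv L _ _ _)))
  = bangm (pair (pi1 \o pi2) (pair pi1 (pi2 \o pi2)))
    \o (m2 L X (with_ L Y Z) \o tensm idm (m2 L Y Z)).
Proof.
  rw <- m2_assoc. rw <- tensm_comp_l. rewrite <- m2_sym, tensm_comp_l.
  rw m2_nat_l. rw m2_assoc_inv. rw alpha_iso1. rewrite comp_idr.
  repeat rw <- bangm_comp. f_equal. f_equal. solve_cartesian.
Qed.

Lemma m2_interchange (A1 A2 B1 B2 : ob L) :
  bangm (pair (pair (pi1 \o pi1) (pi1 \o pi2)) (pair (pi2 \o pi1) (pi2 \o pi2)))
  \o (m2 L (with_ L A1 A2) (with_ L B1 B2) \o tensm (m2 L A1 A2) (m2 L B1 B2))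
  = m2 L (with_ L A1 B1) (with_ L A2 B2)
    \o (tensm (m2 L A1 B1) (m2 L A2 B2) \o interchange L _ _ _ _).
Proof.
  rewrite (tensm_split_rl L (m2 L A1 A2)). rw m2_assoc_inv. rw alpha_nat_r.
  unfold interchange. rewrite (tensm_split_rl L (m2 L A1 B1)). rw <- alpha_inv_nat_r.
  rw m2_assoc_inv. rw alpha_iso1. rewrite comp_idl.
  repeat rw <- tensm_comp_r. rewrite m2_exchange, !tensm_comp_r. rw m2_nat_r.
  repeat rw <- bangm_comp. f_equal. f_equal. solve_cartesian.
Qed.

Lemma contr_m2 (A B : ob L) :
  contr L (with_ L A B) \o m2 L A B =
  tensm (m2 L A B) (m2 L A B) \o (interchange L _ _ _ _ \o tensm (contr L A) (contr L B)).
Proof.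
  unfold contr at 1. assoc_right. symmetry.
  apply (inverse_comp_eq L (m2 L _ _)); [apply m2_iso2 |].
  rw <- m2_interchange. rw <- tensm_comp. unfold contr. rw m2_iso1. rw m2_iso1.
  rewrite !comp_idl. rw <- m2_nat. rw <- bangm_comp. f_equal. f_equal. solve_cartesian.
Qed.

Lemma Ev_bangm_pair {X A B : ob L}
    (F : hom L (bang L X) (lhom L (bang L A) B)) (G : hom L (bang L X) A) :
  Ev L A B \o bangm (pair F G)
  = ev L _ _ \o (tensm (F \o der L (bang L X)) (bangm G) \o contr L (bang L X)).
Proof.
  unfold Ev, contr.
  replace (pair F G) with (pair (F \o pi1) (G \o pi2) \o pair idm idm) by solve_cartesian.
  rewrite bangm_comp. rw m2_inv_nat. rw <- tensm_comp. rewrite der_nat, comp_idl. reflexivity.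
Qed.

Lemma kcomp_linear {A C D : ob L} (h : hom L C D) (g : hom L (bang L A) C) :
  kcomp L (der L D \o bangm h) g = h \o g.
Proof. unfold kcomp. rw der_nat. rw der_nat. rw comonad_l. rewrite comp_idr. reflexivity. Qed.

End Seely.

Section Translation.
Variable L : LLModel.
Variable U : ob L.
Hypothesis eU : U = with_ L (bang L U) (lhom L (bang L U) U).

Lemma unfoldU_foldU : unfoldU L U eU \o foldU L U eU = idm.
Proof.
  (* [U] occurs on both sides of [eU]: abstract the right side before eliminating. *)
  unfold unfoldU, foldU. generalize eU.
  generalize (with_ L (bang L U) (lhom L (bang L U) U)). intros Y e. destruct e. apply comp_idl.
Qed.

Lemma weak_mu (c : list var) : weak L (wp L U c) \o mu_r L U c = weak_all L U c.
Proof.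
  induction c as [|y c IH]; simpl.
  - unfold weak. rewrite (top_hom_eq L (term L (top L)) idm), bangm_id, comp_idr, m0_iso2.
    reflexivity.
  - rw weak_m2. rw <- tensm_comp. rewrite IH, comp_idr. reflexivity.
Qed.

Lemma var_int_mu (c : list var) (x : var) :
  var_int L U c x = proj L U c x \o (der L _ \o mu_r L U c).
Proof.
  induction c as [|y c IH]; simpl.
  - rewrite zero_comp. reflexivity.
  - destruct (Nat.eq_dec x y).
    + rw der_pi2_m2. rw <- tensm_comp. rewrite weak_mu, comp_idl. reflexivity.
    + rw der_pi1_m2. rw <- tensm_comp.
      rewrite comp_idl, comp_idr, (tensm_split_rl L (mu_r L U c)).
      rw runit_nat. rewrite IH. assoc_right. reflexivity.
Qed.

Lemma dig_mu (c : list var) : dig L _ \o mu_r L U c = bangm (mu_r L U c) \o coalg L U c.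
Proof.
  induction c as [|y c IH]; simpl.
  - unfold mu0. rw <- bangm_comp. rewrite m0_iso1, bangm_id, comp_idl. reflexivity.
  - rewrite bangm_comp. rw <- mu2_nat. rewrite bangm_id. rw <- tensm_comp.
    rewrite comp_idl, <- IH. rw dig_m2. rw <- tensm_comp. rewrite comp_idr. reflexivity.
Qed.

Lemma contr_mu (c : list var) :
  contr L (wp L U c) \o mu_r L U c = tensm (mu_r L U c) (mu_r L U c) \o contr_tp L U c.
Proof.
  induction c as [|y c IH]; simpl.
  - assert (Hm0 : m2 L (top L) (top L) \o tensm (m0 L) idm
                  = bangm (pair idm idm) \o lunit L (bang L (top L))).
    { rewrite <- m2_lunit. rw <- bangm_comp. symmetry. apply bangm_id_l. solve_cartesian. }
    unfold contr. assoc_right. symmetry. apply (inverse_comp_eq L (m2 L _ _)); [apply m2_iso2 |].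
    rewrite (tensm_split_rl L (m0 L)). rw Hm0. rw lunit_nat. rw lunit_iso1.
    rewrite comp_idr. reflexivity.
  - rw contr_m2. rw <- tensm_comp. rewrite IH, comp_idr.
    rewrite tensm_comp. rw <- interchange_nat. rewrite tensm_id. rw <- tensm_comp.
    rewrite comp_idl. reflexivity.
Qed.

Lemma bint_r_cbn (M : lterm) (c : list var) :
  bint_r L U eU (cbn M) c = nint_r L U eU M c \o mu_r L U c.
Proof.
  revert c. induction M as [x | y N IH | N IHN P IHP]; intro c; simpl.
  - rewrite var_int_mu. assoc_right. reflexivity.
  - rewrite IH. unfold lam_n. rewrite kcomp_linear. unfold Cur, lam.
    assoc_right. rewrite pair_comp, zero_comp, comp_idl, cur_comp. simpl. assoc_right. reflexivity.
  - rewrite IHN, IHP. rw unfoldU_foldU. rewrite comp_idl. rw pi1_pair.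
    unfold app_n. rewrite kcomp_linear. unfold kcomp. rw Ev_bangm_pair. rw contr_dig.
    rw contr_mu. rw <- tensm_comp. rw <- tensm_comp. rw comonad_l. rewrite comp_idl. rw dig_mu.
    rewrite bangm_comp. unfold Defs.app. assoc_right. reflexivity.
Qed.
End Translation.

Theorem mainTheorem2 (L : LLModel) (U : ob L)
    (eU : U = with_ L (bang L U) (lhom L (bang L U) U))
    (M : lterm) (xs : list var) :
  NoDup xs ->
  incl (fv M) xs ->
  bint L U eU (cbn M) xs = comp (nint L U eU M xs) (mu L U xs).
Proof.
  (* Both interpretations read a variable at its last occurrence in the context. *)
  intros _ _. apply bint_r_cbn.
Qed.
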